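(* Let $l\ge1$ and consider a path graph with vertices $v_0,\dots,v_l$, where $v_i,v_j$ are adjacent iff $|i-j|=1$, whose vertices are each labeled with one of two colors $5$ and $6$. A move consists of choosing two adjacent vertices with the same color and changing the colors of both. If either $l$ is even and $v_0,v_l$ have different colors, or $l$ is odd and $v_0,v_l$ have the same color, then there is a finite sequence of moves after which $v_0$ and $v_l$ have both switched colors and every other vertex has its original color. *)

From HB Require Import structures.
From mathcomp Require Import all_boot.
Set Implicit Arguments. Unset Strict Implicit. Unset Printing Implicit Defensive.

Inductive color := C5 | C6.

Definition swapc (a : color) : color := match a with C5 => C6 | C6 => C5 end.

Definition color_eqb (a b : color) : bool :=
  match a, b with C5, C5 | C6, C6 => true | _, _ => false end.
Lemma color_eqP : Equality.axiom color_eqb.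
Proof. by case; case; constructor. Qed.
HB.instance Definition _ := hasDecEq.Build color color_eqP.

(* A coloring of the path v_0, ..., v_l: vertex v_i gets color c i
   (values of c at indices > l are irrelevant and never changed). *)
Definition coloring := nat -> color.

Definition move (l : nat) (c c' : coloring) : Prop :=
  exists i : nat, i < l /\ c i = c i.+1 /\
    forall j : nat, c' j = if (j == i) || (j == i.+1) then swapc (c j) else c j.

Inductive reachable (l : nat) : coloring -> coloring -> Prop :=
| reach_refl c : reachable l c c
| reach_step c c' c'' : move l c c' -> reachable l c' c'' -> reachable l c c''.

(* Let T_a exchange the colours of v_a and v_(a+1) and change both.  When the
   two colours agree T_a is a move, and when they differ T_a is the identity,
   so T_a is always reachable.  Conjugating by T_a shifts the left end of an
   exchange, so by induction on b - a the operation exchanging the colours of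
   v_a and v_b, and changing both iff b - a is odd, is reachable.  For a = 0
   and b = l the hypothesis says exactly that this changes both end colours. *)

From Stdlib Require Import FunctionalExtensionality.
From mathcomp Require Import all_boot zify.

Set Implicit Arguments.
Unset Strict Implicit.
Unset Printing Implicit Defensive.

Lemma swapcK : involutive swapc.
Proof. by case. Qed.

Lemma neq_swapc (x y : color) : x <> y -> y = swapc x.
Proof. by case: x; case: y. Qed.

Definition swapc_if (p : bool) (x : color) : color := if p then swapc x else x.

Lemma swapc_if_eq (x y : color) : swapc_if (x == y) y = swapc x.
Proof. by case: x; case: y. Qed.

Lemma reachable_trans l c d e :
  reachable l c d -> reachable l d e -> reachable l c e.
Proof. by elim=> // x y z xy _ IH /IH; apply: reach_step. Qed.

Definition adj_flip (a : nat) (c : coloring) : coloring := fun j =>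
  if j == a then swapc (c a.+1) else if j == a.+1 then swapc (c a) else c j.

Lemma adj_flip_id a c : c a <> c a.+1 -> adj_flip a c = c.
Proof.
move=> /neq_swapc ca1; apply: functional_extensionality => j; rewrite /adj_flip.
by case: eqP => [->|_]; [rewrite ca1 swapcK | case: eqP => [->|]].
Qed.

Lemma move_adj_flip l a c : a < l -> c a = c a.+1 -> move l c (adj_flip a c).
Proof.
move=> al ca; exists a; split=> //; split=> // j; rewrite /adj_flip.
by case: (j =P a) => [->|_]; last case: (j =P a.+1) => [->|_]; rewrite ?eqxx ?ca.
Qed.

Lemma reachable_adj_flip l a c : a < l -> reachable l c (adj_flip a c).
Proof.
move=> al; have [ca|ca] := eqVneq (c a) (c a.+1).
  exact: reach_step (move_adj_flip al ca) (reach_refl _ _).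
by rewrite adj_flip_id; [apply: reach_refl | apply/eqP].
Qed.

Definition exchange (a b : nat) (c : coloring) : coloring := fun j =>
  if j == a then swapc_if (odd (b - a)) (c b)
  else if j == b then swapc_if (odd (b - a)) (c a) else c j.

Lemma exchange_adj a c : exchange a a.+1 c = adj_flip a c.
Proof. by rewrite /exchange subSnn. Qed.

Lemma exchange_shift a b c :
  a < b -> exchange a b.+1 c = adj_flip a (exchange a.+1 b.+1 (adj_flip a c)).
Proof.
move=> ab; apply: functional_extensionality => j.
have oddS : odd (b.+1 - a) = ~~ odd (b.+1 - a.+1) by rewrite subSS subSn ?(ltnW ab).
have ab0 : a < b.+1 by rewrite ltnS ltnW.
rewrite /exchange /adj_flip oddS !eqxx (ltn_eqF (ltnSn a)) (gtn_eqF (ltnSn a)).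
rewrite (gtn_eqF (ab : a.+1 < b.+1)) (ltn_eqF ab0) (gtn_eqF ab0).
case: odd; have [_|_] := eqVneq j a; rewrite ?swapcK //=.
all: by have [->|_] := eqVneq j a.+1; rewrite ?swapcK ?eqSS ?(ltn_eqF ab).
Qed.

Lemma reachable_exchange l a b c : a < b <= l -> reachable l c (exchange a b c).
Proof.
case/andP=> ab; have [k ->] : exists k, b = a + k.+1 by exists (b - a.+1); lia.
elim: k a c {ab} => [|k IH] a c bl.
  by rewrite addn1 exchange_adj; apply: reachable_adj_flip; lia.
have al : a < l by lia.
rewrite addnS exchange_shift; last lia.
apply: reachable_trans (reachable_adj_flip _ al) _.
apply: reachable_trans (reachable_adj_flip _ al).
by rewrite -addSn; apply: IH; lia.
Qed.

Theorem lemma13 (l : nat) (c : coloring) :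
  1 <= l ->
  (~~ odd l /\ c 0 <> c l) \/ (odd l /\ c 0 = c l) ->
  exists c' : coloring, reachable l c c' /\
    c' 0 = swapc (c 0) /\ c' l = swapc (c l) /\
    (forall i : nat, 0 < i < l -> c' i = c i).
Proof.
move=> l_gt0 parity; exists (exchange 0 l c).
have odd_l : odd l = (c 0 == c l).
  by case: parity => [[/negbTE -> /eqP/negbTE ->] | [-> ->]]; rewrite ?eqxx.
split; first by apply: reachable_exchange; rewrite l_gt0 leqnn.
rewrite /exchange subn0 eqxx (gtn_eqF l_gt0) eqxx odd_l swapc_if_eq eq_sym.
split=> //; split; first exact: swapc_if_eq.
by move=> i /andP[i_gt0 il]; rewrite (gtn_eqF i_gt0) (ltn_eqF il).
Qed.
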